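(* Let $R$ be an integral domain and let $A$ be an evolution algebra over $R$ with finite basis $x_1,\dots,x_N$ and structure coefficient matrix $C=(c_{ki})_{N\times N}$. Then $A$ is nilpotent if and only if there is a reordering (permutation) of the basis elements $x_1,\dots,x_N$ such that, with respect to this ordering, $C$ is strictly upper triangular (i.e. $c_{ki}=0$ whenever $k\ge i$ in the new ordering).
   Context: An evolution algebra over a commutative ring $R$ is a free $R$-module $A$ with basis $\{x_i\}$ equipped with the $R$-bilinear multiplication determined by $x_ix_j=0$ for $i\ne j$ and $x_i^2=\sum_k c_{ki}x_k$ with $c_{ki}\in R$. The structure coefficient matrix $C$ has $(k,i)$ entry $c_{ki}$, so its $i$-th column consists of the coordinates of $x_i^2$. Powers: $A^1=A$, $A^n=A^{n-1}A$; $A$ is nilpotent if $A^n=(0)$ for some $n$. *)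

From HB Require Import structures.
From mathcomp Require Import all_boot all_order all_algebra all_fingroup.
Set Implicit Arguments. Unset Strict Implicit. Unset Printing Implicit Defensive.
Import Order.TTheory GRing.Theory Num.Theory.
Local Open Scope ring_scope.

(* The evolution algebra A = R^N with basis x_0..x_{N-1} (standard basis of
   column vectors) and structure matrix C, where column i of C holds the
   coordinates of x_i^2.  Product: (sum u_i x_i)(sum v_j x_j) = sum_i u_i v_i x_i^2. *)
Definition evo_mul (R : comRingType) (N : nat) (C : 'M[R]_N) (u v : 'cV[R]_N)
  : 'cV[R]_N := C *m (\col_i (u i 0 * v i 0)).

(* evo_pow C n v : v lies in A^n, where A^1 = A, A^(n+1) = A^n A
   (the R-submodule spanned by products a*b, a in A^n, b in A).
   Convention: A^0 := A. *)
Inductive evo_pow (R : comRingType) (N : nat) (C : 'M[R]_N) : nat -> 'cV[R]_N -> Prop :=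
| evo_pow_base n v : (n <= 1)%N -> evo_pow C n v
| evo_pow_mul n a b : evo_pow C n.+1 a -> evo_pow C n.+2 (evo_mul C a b)
| evo_pow_zero n : evo_pow C n 0
| evo_pow_add n u v : evo_pow C n u -> evo_pow C n v -> evo_pow C n (u + v)
| evo_pow_scale n (r : R) u : evo_pow C n u -> evo_pow C n (r *: u).

Definition evo_nilpotent (R : comRingType) (N : nat) (C : 'M[R]_N) : Prop :=
  exists n : nat, forall v, evo_pow C n v -> v = 0.

From HB Require Import structures.
From mathcomp Require Import all_boot all_order all_algebra all_fingroup.
From mathcomp Require Import zify.
Import Order.TTheory GRing.Theory Num.Theory.
Local Open Scope ring_scope.

(* Draw an edge i -> k when x_k occurs in x_i^2, i.e. c_{ki} != 0.  Over a
   domain, a walk of length m from i yields the nonzero product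
   x_i^2 x_{k_1} ... x_{k_m} in A^{m+2}, so nilpotency bounds the length of
   walks.  The number of lengths m for which a walk from i exists then
   strictly decreases along edges, and ordering the basis by this height
   makes C strictly upper triangular.  Conversely, if C is strictly upper
   triangular for the ordering s, every element of A^n has zero coordinates
   at the positions k with s k + n > N, hence A^(N+1) = 0. *)

Set Implicit Arguments.
Unset Strict Implicit.
Unset Printing Implicit Defensive.

Lemma perm_sorted_by n (f : 'I_n -> nat) :
  exists s : 'S_n, forall a b, (f a < f b)%N -> (s a < s b)%N.
Proof.
pose r := [rel a b : 'I_n | (f a <= f b)%N].
pose srt := sort r (enum 'I_n).
have size_srt : size srt = n by rewrite size_sort size_enum_ord.
have mem_srt i : i \in srt by rewrite mem_sort mem_enum.
have index_lt i : (index i srt < n)%N.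
  by move: (mem_srt i); rewrite -index_mem size_srt.
have index_inj : injective (fun i => Ordinal (index_lt i)).
  move=> a b /(congr1 val) /= eq_ab.
  by rewrite -(nth_index a (mem_srt a)) eq_ab nth_index.
exists (perm index_inj) => a b lt_fab; rewrite !permE /=.
rewrite ltnNge leq_eqVlt; apply/negP => /orP[/eqP eq_ba | lt_ba].
  have eq_ab : b = a by apply: index_inj; apply: val_inj.
  by move: lt_fab; rewrite eq_ab ltnn.
have srt_sorted : sorted r srt by apply: sort_sorted => x y; apply: leq_total.
have r_trans : transitive r by move=> x y z; apply: leq_trans.
have := sorted_ltn_nth r_trans a srt_sorted.
move=> /(_ (index b srt) (index a srt)); rewrite !inE size_srt !index_lt.
by rewrite !nth_index // => /(_ isT isT lt_ba) /=; rewrite leqNgt lt_fab.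
Qed.

Section EvolutionAlgebra.
Variables (R : comNzRingType) (N : nat) (C : 'M[R]_N).

Lemma evo_mul_delta (u : 'cV[R]_N) k :
  evo_mul C u (delta_mx k 0) = u k 0 *: col k C.
Proof.
rewrite colE /evo_mul scalemxAr; congr (C *m _).
apply/matrixP => i j; rewrite !mxE (ord1 j) /=.
by case: (eqVneq i k) => [->|_]; rewrite ?mulr1 ?mulr0.
Qed.

Lemma evo_pow_succ n v : evo_pow C n.+1 v -> evo_pow C n v.
Proof.
move En1: n.+1 => n1 pow_v; elim: pow_v n En1 => {n1 v}.
- by move=> n1 v le_n1 n En1; apply: evo_pow_base; lia.
- move=> [|n1] a b _ IHa n [->]; first exact: evo_pow_base.
  exact/evo_pow_mul/IHa.
- by move=> *; apply: evo_pow_zero.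
- by move=> n1 u v _ IHu _ IHv n En1; apply: evo_pow_add; [apply: IHu | apply: IHv].
- by move=> n1 r u _ IHu n En1; apply: evo_pow_scale; apply: IHu.
Qed.

Lemma evo_pow_le m n v : (m <= n)%N -> evo_pow C n v -> evo_pow C m v.
Proof.
move=> /subnK <-; elim: (n - m)%N v => [//|d IHd] v pow_v.
by apply: IHd; apply: evo_pow_succ; rewrite -addSn.
Qed.

(* Strict upper triangularity for the ordering s pushes each new factor one
   step further down the ordering. *)
Lemma evo_pow_triangular_coord_eq0 (s : 'I_N -> 'I_N) n v k :
  (forall k i, (s i <= s k)%N -> C k i = 0) ->
  evo_pow C n v -> (N < s k + n)%N -> v k 0 = 0.
Proof.
move=> C_triangular pow_v; elim: pow_v k => {n v}.
- by move=> n v le_n1 k; have := ltn_ord (s k); lia.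
- move=> n a b _ IHa k lt_N; rewrite /evo_mul mxE big1 // => i _.
  rewrite mxE; case: (leqP (s i) (s k)) => [le_ik | lt_ki].
    by rewrite C_triangular // mul0r.
  by rewrite IHa ?mul0r ?mulr0 //; lia.
- by move=> n k _; rewrite mxE.
- by move=> n u v _ IHu _ IHv k lt_N; rewrite mxE IHu // IHv // addr0.
- by move=> n r u _ IHu k lt_N; rewrite mxE IHu // mulr0.
Qed.

Lemma evo_nilpotent_triangular (s : 'I_N -> 'I_N) :
  (forall k i, (s i <= s k)%N -> C k i = 0) -> evo_nilpotent C.
Proof.
move=> C_triangular; exists N.+1 => v pow_v; apply/matrixP => k j.
rewrite (ord1 j) mxE; apply: evo_pow_triangular_coord_eq0 C_triangular pow_v _.
lia.
Qed.

Fixpoint evo_walk (m : nat) (i : 'I_N) : bool :=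
  if m is m'.+1 then [exists k, (C k i != 0) && evo_walk m' k] else true.

Lemma evo_walk_cons m i k : C k i != 0 -> evo_walk m k -> evo_walk m.+1 i.
Proof. by move=> nz_ki walk_k /=; apply/existsP; exists k; rewrite nz_ki. Qed.

Section Height.
Variable M : nat.
Hypothesis walk_bounded : forall i, ~~ evo_walk M i.

Definition evo_height (i : 'I_N) : nat := count (evo_walk ^~ i) (iota 0 M).

Lemma evo_height_edge i k : C k i != 0 -> (evo_height k < evo_height i)%N.
Proof.
move=> nz_ki; rewrite /evo_height.
have -> : count (evo_walk ^~ i) (iota 0 M) = count (evo_walk ^~ i) (iota 0 M.+1).
  by rewrite -addn1 iotaD count_cat /= (negbTE (walk_bounded i)) !addn0.
rewrite /= add1n ltnS -[1%N]/(1 + 0)%N iotaDl count_map.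
by apply: sub_count => m /=; apply: evo_walk_cons nz_ki.
Qed.

End Height.

Lemma triangular_of_walk_bounded M :
  (forall i, ~~ evo_walk M i) ->
  exists s : 'S_N, forall k i, (s i <= s k)%N -> C k i = 0.
Proof.
move=> walk_bounded; have [s s_mono] := perm_sorted_by (evo_height M).
exists s => k i le_ik; apply/eqP; apply: contraT => nz_ki.
by move: le_ik; rewrite leqNgt s_mono // evo_height_edge.
Qed.

End EvolutionAlgebra.

Section Domain.
Variables (R : idomainType) (N : nat) (C : 'M[R]_N).

Lemma evo_pow_walk_neq0 m k n (c : R) :
  evo_walk C m.+1 k -> c != 0 -> evo_pow C n.+2 (c *: col k C) ->
  exists2 v, v != 0 & evo_pow C (m + n).+2 v.
Proof.
elim: m k n c => [|m IHm] k n c /= /existsP[k' /andP[nz_k'k walk_k']] nz_c pow_v.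
  exists (c *: col k C) => //; apply/eqP => /matrixP /(_ k' 0).
  by rewrite !mxE => /eqP; rewrite mulf_eq0 (negPf nz_c) (negPf nz_k'k).
rewrite -addnS; apply: (IHm k' n.+1 (c * C k' k)) => //.
  by rewrite mulf_eq0 negb_or nz_c.
have := evo_pow_mul (delta_mx k' 0) pow_v.
by rewrite evo_mul_delta !mxE.
Qed.

Lemma evo_nilpotent_walk_bounded :
  evo_nilpotent C -> exists M, forall i, ~~ evo_walk C M i.
Proof.
move=> [n A_n_eq0]; exists n.+1 => i; apply/negP => walk_i.
have pow_sq : evo_pow C 2 (1 *: col i C).
  have := evo_pow_mul (delta_mx i 0) (evo_pow_base C (delta_mx i 0) (leqnn 1)).
  by rewrite evo_mul_delta mxE !eqxx.
have [v nz_v pow_v] := evo_pow_walk_neq0 walk_i (oner_neq0 R) pow_sq.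
have le_n : (n <= (n + 0).+2)%N by lia.
by move: nz_v; rewrite (A_n_eq0 v (evo_pow_le le_n pow_v)) eqxx.
Qed.

End Domain.

Theorem theorem2p8 (R : idomainType) (N : nat) (C : 'M[R]_N) :
  evo_nilpotent C <->
  exists s : 'S_N, forall k i : 'I_N, (s i <= s k)%N -> C k i = 0.
Proof.
split.
- move=> /evo_nilpotent_walk_bounded [M walk_bounded].
  exact: triangular_of_walk_bounded walk_bounded.
- by move=> [s C_triangular]; apply: evo_nilpotent_triangular C_triangular.
Qed.
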